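(* Let $L$ and $R$ be finite sets of edges (2-subsets of $[n]$) and $M$ a finite set of triangles (3-subsets of $[n]$), satisfying: (LR) there are no $\{l_1<l_2\}\in L$ and $\{r_1<r_2\}\in R$ with $r_1<l_1<r_2<l_2$; (LMR) there are no $\{v_1<v_2\}\in L\cup R$ and $\{w_1<w_2<w_3\}\in M$ with $w_1<v_1<w_2<v_2<w_3$; (MM) there are no $\{v_1<v_2<v_3\},\{w_1<w_2<w_3\}\in M$ with $v_1<w_1<v_2<w_2<v_3<w_3$. For an edge $e=\{v_1<v_2\}$ consider the conditions: (Le) there is no $\{l_1<l_2\}\in L$ with $v_1<l_1<v_2<l_2$; (Me) there is no $\{w_1<w_2<w_3\}\in M$ with $w_1<v_1<w_2<v_2<w_3$; (Re) there is no $\{r_1<r_2\}\in R$ with $r_1<v_1<r_2<v_2$. Let $V\subseteq[n]$ with $|V|\ge3$ be such that every edge of the convex polygon $P=\mathrm{conv}(V)$ (the points $\gamma_2(t_i)$, $i\in V$) satisfies (Le), (Me) and (Re). Then there is a triangulation $T$ of $P$ with vertices in $V$ such that every edge of $T$ satisfies (Le), (Me) and (Re).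
   Context: $\gamma_2=\{(t,t^2):t\in\mathbb{R}\}$. Fix $t_1<\dots<t_n$ and identify $\gamma_2(t_i)$ with $i\in[n]$; subsets of $[n]$ are ordered by the usual order of integers. $L$ and $R$ may intersect, and any of $L,M,R$ may be empty. *)

From HB Require Import structures.
From mathcomp Require Import all_boot all_order all_algebra.
Set Implicit Arguments. Unset Strict Implicit. Unset Printing Implicit Defensive.
Import Order.TTheory GRing.Theory Num.Theory.
Local Open Scope ring_scope.

Section Defs.
Variables (R : realFieldType) (n : nat) (t : 'I_n -> R).

Definition pt (i : 'I_n) : R * R := (t i, t i ^+ 2).

Definition conv (S : {set 'I_n}) (x : R * R) : Prop :=
  exists lam : 'I_n -> R,
    [/\ forall i, 0 <= lam i,
        forall i, i \notin S -> lam i = 0,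
        \sum_i lam i = 1 &
        x = (\sum_i lam i * (pt i).1, \sum_i lam i * (pt i).2)].

Definition orient (a b c : 'I_n) : R :=
  ((pt b).1 - (pt a).1) * ((pt c).2 - (pt a).2)
  - ((pt b).2 - (pt a).2) * ((pt c).1 - (pt a).1).

(* {a,b} is an edge of the convex polygon conv(V): the line through pt a, pt b
   supports conv(V), i.e. all points of V lie weakly on one side of it. *)
Definition polygon_edge (V : {set 'I_n}) (a b : 'I_n) : Prop :=
  [/\ a \in V, b \in V, a != b &
      (forall c, c \in V -> 0 <= orient a b c) \/
      (forall c, c \in V -> orient a b c <= 0)].

(* T is a triangulation of conv(V) with vertices in V: a set of triangles
   (3-subsets of V) whose convex hulls cover conv(V) and any two of which
   intersect in the convex hull of their common vertices (a common face). *)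
Definition is_triangulation (V : {set 'I_n}) (T : {set {set 'I_n}}) : Prop :=
  [/\ forall s, s \in T -> s \subset V /\ #|s| = 3,
      forall x, conv V x <-> exists2 s, s \in T & conv s x &
      forall s1 s2, s1 \in T -> s2 \in T ->
        forall x, (conv s1 x /\ conv s2 x) <-> conv (s1 :&: s2) x].
End Defs.

Section Conds.
Variable n : nat.
Implicit Types (L Rg : {set {set 'I_n}}) (M : {set {set 'I_n}}).

Definition condLR L Rg : Prop :=
  ~ exists l1 l2 r1 r2 : 'I_n,
      [/\ [set l1; l2] \in L, [set r1; r2] \in Rg &
          [/\ (r1 < l1)%N, (l1 < r2)%N & (r2 < l2)%N]].

Definition condLMR L M Rg : Prop :=
  ~ exists v1 v2 w1 w2 w3 : 'I_n,
      [/\ [set v1; v2] \in L :|: Rg, [set w1; w2; w3] \in M &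
          [/\ (w1 < v1)%N, (v1 < w2)%N, (w2 < v2)%N & (v2 < w3)%N]].

Definition condMM M : Prop :=
  ~ exists v1 v2 v3 w1 w2 w3 : 'I_n,
      [/\ [set v1; v2; v3] \in M, [set w1; w2; w3] \in M &
          [/\ (v1 < w1)%N, (w1 < v2)%N, (v2 < w2)%N, (w2 < v3)%N & (v3 < w3)%N]].

Definition condLe L (v1 v2 : 'I_n) : Prop :=
  ~ exists l1 l2 : 'I_n,
      [/\ [set l1; l2] \in L, (v1 < l1)%N, (l1 < v2)%N & (v2 < l2)%N].

Definition condMe M (v1 v2 : 'I_n) : Prop :=
  ~ exists w1 w2 w3 : 'I_n,
      [/\ [set w1; w2; w3] \in M &
          [/\ (w1 < v1)%N, (v1 < w2)%N, (w2 < v2)%N & (v2 < w3)%N]].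

Definition condRe Rg (v1 v2 : 'I_n) : Prop :=
  ~ exists r1 r2 : 'I_n,
      [/\ [set r1; r2] \in Rg, (r1 < v1)%N, (v1 < r2)%N & (r2 < v2)%N].

Definition edge_ok L M Rg (e : {set 'I_n}) : Prop :=
  forall v1 v2 : 'I_n, e = [set v1; v2] -> (v1 < v2)%N ->
    [/\ condLe L v1 v2, condMe M v1 v2 & condRe Rg v1 v2].
End Conds.

(* Ear clipping.  On the parabola the edges of conv(V) are the pairs of
   neighbours in V together with {min V, max V}.  If x < v < y are neighbours
   in V and the diagonal {x, y} satisfies (Le), (Me) and (Re), then the
   triangle xvy together with a triangulation of conv(V :\ v) triangulates
   conv(V), and the edges of conv(V :\ v) again satisfy the conditions.
   Such an ear exists: if no diagonal u_(i-1) u_(i+1) of the sorted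
   u_0 < ... < u_(k-1) were good, every interior u_i would be the middle
   vertex of an edge of L or R or a triangle of M whose span encloses
   u_(i-1) and u_(i+1).  No span encloses u_0 and u_(k-1), as that edge is
   good, and (LR), (LMR), (MM) forbid two spans to cross around both middle
   vertices; these constraints admit no solution, by a descent in which the
   left end of a window of spans strictly increases. *)

From mathcomp Require Import all_boot all_order all_algebra.
From mathcomp Require Import ring lra zify.
From Stdlib Require Import Classical IndefiniteDescription.
Import Order.TTheory GRing.Theory Num.Theory.

Set Implicit Arguments. Unset Strict Implicit. Unset Printing Implicit Defensive.

Section BlockingIntervals.
Variables (k : nat) (u A B : nat -> nat).
Hypothesis u_lt : forall i j, i < j -> j < k -> u i < u j.
Hypothesis blocks : forall i, 0 < i < k.-1 -> A i < u i.-1 /\ u i.+1 < B i.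
Hypothesis not_cover : forall i, 0 < i < k.-1 -> ~ (A i < u 0 /\ u k.-1 < B i).
Hypothesis no_cross : forall i j, 0 < i -> i < j < k.-1 ->
  ~ [/\ A i < A j, A j < u i, u j < B i & B i < B j].

Let u_le i j : i <= j -> j < k -> u i <= u j.
Proof. by rewrite leq_eqVlt => /predU1P [-> // | ij] jk; apply/ltnW/u_lt. Qed.

Definition window lo hi p q :=
  [/\ 0 < p <= q, q < k.-1, A p < lo <= A q, hi < B q &
      lo <= u p /\ forall i, p <= i <= q -> ~ (A i < lo /\ hi < B i)].

Lemma window_step lo hi p q : window lo hi p q ->
  exists lo' hi' p' q', [/\ window lo' hi' p' q', lo < lo' & lo' <= u k.-1].
Proof.
case=> /andP [p0 pq] qk /andP [Ap Aq] Bq [lo_up uncovered].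
have {pq} pq : p < q by rewrite ltn_neqAle pq andbT; apply/eqP => epq; subst; lia.
pose P i := (p <= i <= q) && (A i < lo).
have exP : exists i, P i by exists p; rewrite /P leqnn ltnW.
have ubP i : P i -> i <= q by move=> /andP [/andP []].
case: (ex_maxnP exP ubP) => m /andP [/andP [pm mq] Am] m_max.
have {mq} mq : m < q by rewrite ltn_neqAle mq andbT; apply/eqP => emq; subst; lia.
have Bm : B m <= hi by have := uncovered m; lia.
pose Q i := (m < i <= q) && (B m < B i).
have exQ : exists i, Q i by exists q; rewrite /Q mq leqnn /=; lia.
case: (ex_minnP exQ) => j /andP [/andP [mj jq] Bmj] j_min.
have Bj1 : B j.-1 <= B m.
  case: (ltngtP m j.-1) => [mj1 | | <- //]; last lia.
  by have := j_min j.-1; rewrite /Q mj1 (leq_trans (leq_pred j) jq) /=; lia.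
have lo_Aj : lo <= A j.
  by have := m_max j; rewrite /P (leq_trans pm (ltnW mj)) jq /=; lia.
have um_Aj : u m <= A j.
  rewrite leqNgt; apply/negP => Aj_um.
  have [_] := blocks (i := j.-1) ltac:(lia); rewrite (ltn_predK mj) => uj_B.
  by apply: (no_cross (i := m) (j := j)); [lia | lia | split; lia].
have lo_um : lo < u m.
  case: (ltngtP p m) => [pm' | | epm]; first by have := u_lt pm' ltac:(lia); lia.
    lia.
  subst m; have [/= Ap1 _] := blocks (i := p.+1) ltac:(lia).
  by have := m_max p.+1; rewrite /P leqnSn pq /=; lia.
exists (u m), (B m), m, j; split => //; last by apply: u_le; lia.
split; try lia; split => // i /andP [mi ij].
case: (ltngtP i j) => [ij' | | ->]; [ | lia | lia].
case: (ltngtP m i) => [mi' | | <-]; [ | lia | lia].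
by have := j_min i; rewrite /Q mi' (ltnW (leq_trans ij' jq)) /=; lia.
Qed.

Lemma no_window lo hi p q : ~ window lo hi p q.
Proof.
have [d] := ubnP (u k.-1 - lo); elim: d lo hi p q => // d IH lo hi p q hd hw.
have [lo' [hi' [p' [q' [hw' lo_lt lo_le]]]]] := window_step hw.
by apply: (IH lo' hi' p' q') => //; lia.
Qed.

Lemma blocking_intervals_absurd : 2 < k -> False.
Proof.
move=> k3; apply: (@no_window (u 0) (u k.-1) 1 k.-2).
have [/= A1 _] := blocks (i := 1) ltac:(lia).
have [_ Bk] := blocks (i := k.-2) ltac:(lia).
have k2 : k.-2.+1 = k.-1 by lia.
rewrite k2 in Bk.
split; try lia.
- by have := not_cover (i := k.-2) ltac:(lia); lia.
- split; first by apply: u_le; lia.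
  by move=> i hi; apply: not_cover; lia.
Qed.
End BlockingIntervals.

Definition ear n (V : {set 'I_n}) (x v y : 'I_n) :=
  [/\ [/\ x \in V, v \in V & y \in V], x < v < y &
      forall c, c \in V -> x < c < y -> c = v].

Lemma ear_gap_left n (V : {set 'I_n}) x v y c : ear V x v y -> c \in V -> ~~ (x < c < v).
Proof.
case=> _ /andP [xv vy] only_v cV; apply/negP => xcv.
by have := only_v c cV ltac:(lia) => ecv; move: xcv; rewrite ecv ltnn andbF.
Qed.

Lemma ear_gap_right n (V : {set 'I_n}) x v y c : ear V x v y -> c \in V -> ~~ (v < c < y).
Proof.
case=> _ /andP [xv vy] only_v cV; apply/negP => vcy.
by have := only_v c cV ltac:(lia) => ecv; move: vcy; rewrite ecv ltnn.
Qed.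

Section SortedVertices.
Variables (n : nat) (V : {set 'I_n}) (x0 : 'I_n).

Definition vtx i := nth x0 (enum V) i.

Lemma sorted_enum_val : sorted ltn (map val (enum V)).
Proof.
rewrite -[enum _](eq_filter (mem_enum _)) -(eq_filter (mem_map val_inj _)).
by rewrite -filter_map (sorted_filter ltn_trans) // unlock val_ord_enum iota_ltn_sorted.
Qed.

Lemma vtx_lt i j : i < j -> j < #|V| -> vtx i < vtx j.
Proof.
move=> ij hj; have hi : i < #|V| by apply: ltn_trans hj.
have := sorted_ltn_nth ltn_trans 0 sorted_enum_val i j.
by rewrite !inE size_map -cardE !(nth_map x0) -?cardE //; apply.
Qed.

Lemma ltn_vtx i j : i < #|V| -> j < #|V| -> (vtx i < vtx j) = (i < j).
Proof.
move=> hi hj; case: (ltngtP i j) => [ij | ji | ->]; first exact: vtx_lt.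
  by apply/negbTE; rewrite -leqNgt ltnW // vtx_lt.
exact: ltnn.
Qed.

Lemma leq_vtx i j : i < #|V| -> j < #|V| -> (vtx i <= vtx j) = (i <= j).
Proof. by move=> hi hj; rewrite leqNgt ltn_vtx // -leqNgt. Qed.

Lemma vtx_in i : i < #|V| -> vtx i \in V.
Proof. by move=> hi; rewrite -mem_enum mem_nth // -cardE. Qed.

Lemma vtx_onto c : c \in V -> exists2 i, i < #|V| & vtx i = c.
Proof.
move=> hc; exists (index c (enum V)); first by rewrite cardE index_mem mem_enum.
by rewrite /vtx nth_index ?mem_enum.
Qed.

Lemma vtx_ear i : 0 < i < #|V|.-1 -> ear V (vtx i.-1) (vtx i) (vtx i.+1).
Proof.
move=> hi; split.
- by split; apply: vtx_in; lia.
- by rewrite !ltn_vtx; lia.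
- move=> c /vtx_onto [j hj <-]; rewrite !ltn_vtx; try lia.
  by move=> hj'; congr vtx; lia.
Qed.
End SortedVertices.

Section Blockers.
Variables (n : nat) (L M Rg : {set {set 'I_n}}).

Definition pair_ok (a b : 'I_n) := [/\ condLe L a b, condMe M a b & condRe Rg a b].

(* The open interval (a, b) spanned by an edge of L or Rg or a triangle of M
   whose middle vertex is v; positions are shifted up by one, so that 0 and
   n.+1 stand for -oo and +oo. *)
Definition blocker (v : 'I_n) (a b : nat) :=
  [\/ a = 0 /\ exists l2 : 'I_n, [set v; l2] \in L /\ b = l2.+1,
      b = n.+1 /\ exists r1 : 'I_n, [set r1; v] \in Rg /\ a = r1.+1 |
      exists w1 w3 : 'I_n, [/\ [set w1; v; w3] \in M, a = w1.+1 & b = w3.+1]].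

Lemma blocker_of_bad_diagonal (p v q : 'I_n) : p < v < q ->
  pair_ok p v -> pair_ok v q -> ~ pair_ok p q ->
  exists a b, [/\ a <= p, q.+1 < b, b <= n.+1 & blocker v a b].
Proof.
move=> /andP [pv vq] [Lpv Mpv Rpv] [Lvq Mvq Rvq] bad_pq.
have mid_v (c : 'I_n) : ~ p < c < v -> ~ v < c < q -> p < c < q -> c = v.
  by move=> h1 h2 h3; apply: ord_inj; lia.
have [/NNPP [l1 [l2 [hl pl1 l1q ql2]]] | [/NNPP [w1 [w2 [w3 [hw [w1p pw2 w2q qw3]]]]] |
      /NNPP [r1 [r2 [hr r1p pr2 r2q]]]]] :
    ~ condLe L p q \/ ~ condMe M p q \/ ~ condRe Rg p q.
- by apply: NNPP => h; apply: bad_pq; split; apply: NNPP => h'; apply: h; tauto.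
- have el1 : l1 = v.
    apply: mid_v; last by lia.
    + by move=> h; apply: Lpv; exists l1, l2; split => //; lia.
    + by move=> h; apply: Lvq; exists l1, l2; split => //; lia.
  subst l1; have bound := ltn_ord l2; exists 0, l2.+1; split; try lia.
  by apply: Or31; split => //; exists l2.
- have ew2 : w2 = v.
    apply: mid_v; last by lia.
    + by move=> h; apply: Mpv; exists w1, w2, w3; split => //; split; lia.
    + by move=> h; apply: Mvq; exists w1, w2, w3; split => //; split; lia.
  subst w2; have bound := ltn_ord w3; exists w1.+1, w3.+1; split; try lia.
  by apply: Or33; exists w1, w3.
- have er2 : r2 = v.
    apply: mid_v; last by lia.
    + by move=> h; apply: Rpv; exists r1, r2; split => //; lia.
    + by move=> h; apply: Rvq; exists r1, r2; split => //; lia.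
  subst r2; have bound := ltn_ord q; exists r1.+1, n.+1; split; try lia.
  by apply: Or32; split => //; exists r1.
Qed.

Lemma blocker_not_cover (lo v hi : 'I_n) a b : lo < v < hi -> pair_ok lo hi ->
  blocker v a b -> ~ (a <= lo /\ hi.+1 < b).
Proof.
move=> /andP [lov vhi] [Llh Mlh Rlh].
case=> [[-> [l2 [hl ->]]] | [-> [r1 [hr ->]]] | [w1 [w3 [hw -> ->]]]] [alo hib].
- by apply: Llh; exists v, l2; split => //; lia.
- by apply: Rlh; exists r1, v; split => //; lia.
- by apply: Mlh; exists w1, v, w3; split => //; split; lia.
Qed.

Hypotheses (hLR : condLR L Rg) (hLMR : condLMR L M Rg) (hMM : condMM M).

Lemma blockers_not_cross (v v' : 'I_n) a b a' b' : v < v' -> b' <= n.+1 ->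
  blocker v a b -> blocker v' a' b' -> ~ [/\ a < a', a' <= v, v'.+1 < b & b < b'].
Proof.
move=> vv' b'n bl bl' [aa' a'v v'b bb'].
case: bl => [[ea [l2 [hl eb]]] | [eb [r1 [hr ea]]] | [w1 [w3 [hw ea eb]]]]; subst a b;
  case: bl' => [[ea' [l2' [hl' eb']]] | [eb' [r1' [hr' ea']]] | [w1' [w3' [hw' ea' eb']]]];
  subst a' b'; try lia.
- by apply: hLR; exists v, l2, r1', v'; split => //; split; lia.
- by apply: hLMR; exists v, l2, w1', v', w3'; rewrite in_setU hl; split => //; split; lia.
- by apply: hLMR; exists r1', v', w1, v, w3; rewrite in_setU hr' orbT; split => //; split; lia.
- by apply: hMM; exists w1, v, w3, w1', v', w3'; split => //; split; lia.
Qed.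
End Blockers.

Section Ears.
Variables (n : nat) (L M Rg : {set {set 'I_n}}).
Hypotheses (hLR : condLR L Rg) (hLMR : condLMR L M Rg) (hMM : condMM M).

Implicit Types V : {set 'I_n}.

Definition boundary_ok V :=
  forall a b, a \in V -> b \in V -> a < b ->
    (forall c, c \in V -> ~~ (a < c < b)) \/ (forall c, c \in V -> a <= c <= b) ->
    pair_ok L M Rg a b.

Lemma boundary_ok_pred V x0 i : boundary_ok V -> 0 < i < #|V| ->
  pair_ok L M Rg (vtx V x0 i.-1) (vtx V x0 i).
Proof.
move=> okV hi; apply: okV; rewrite ?vtx_in ?vtx_lt //; try lia.
by left=> c /(vtx_onto x0) [j hj <-]; rewrite !ltn_vtx //; lia.
Qed.

Lemma boundary_ok_ends V x0 : boundary_ok V -> 1 < #|V| ->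
  pair_ok L M Rg (vtx V x0 0) (vtx V x0 #|V|.-1).
Proof.
move=> okV hV; apply: okV; rewrite ?vtx_in ?vtx_lt //; try lia.
by right=> c /(vtx_onto x0) [j hj <-]; rewrite !leq_vtx //; lia.
Qed.

Lemma exists_ear V : 2 < #|V| -> boundary_ok V ->
  exists x v y, ear V x v y /\ pair_ok L M Rg x y.
Proof.
move=> V3 okV; apply: NNPP => no_ear.
have [x0 _] : exists x0, x0 \in V by apply/card_gt0P; lia.
pose w := vtx V x0.
have blk i : exists ab : nat * nat, 0 < i < #|V|.-1 ->
    [/\ ab.1 <= w i.-1, (w i.+1).+1 < ab.2, ab.2 <= n.+1 & blocker L M Rg (w i) ab.1 ab.2].
  case: (boolP (0 < i < #|V|.-1)) => hi; last by exists (0, 0) => hi'; case/negP: hi.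
  have ord : w i.-1 < w i < w i.+1 by rewrite !ltn_vtx; lia.
  have ok1 : pair_ok L M Rg (w i.-1) (w i) by apply: boundary_ok_pred => //; lia.
  have ok2 : pair_ok L M Rg (w i) (w i.+1) by apply: (@boundary_ok_pred V x0 i.+1) => //; lia.
  have bad : ~ pair_ok L M Rg (w i.-1) (w i.+1).
    by move=> ok; apply: no_ear; exists (w i.-1), (w i), (w i.+1); split => //; apply: vtx_ear.
  have [a [b hab]] := blocker_of_bad_diagonal ord ok1 ok2 bad.
  by exists (a, b).
have [f blk_f] := functional_choice _ blk.
apply: (@blocking_intervals_absurd #|V| (fun i => (w i).+1)
  (fun i => (f i).1) (fun i => (f i).2)); try lia.
- by move=> i j ij jV; rewrite ltnS vtx_lt.
- by move=> i hi; have [] := blk_f i hi.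
- move=> i hi [A0 Bk]; have [_ _ _ bl] := blk_f i hi.
  apply: (blocker_not_cover (lo := w 0) (hi := w #|V|.-1) _ _ bl); last by lia.
  + by rewrite !ltn_vtx; lia.
  + by apply: boundary_ok_ends => //; lia.
- move=> i j i0 /andP [ij jV]; have [_ _ _ bl] := blk_f i ltac:(lia).
  have [_ _ bn bl'] := blk_f j ltac:(lia).
  apply: (blockers_not_cross hLR hLMR hMM _ bn bl bl').
  by rewrite vtx_lt //; lia.
Qed.
End Ears.

Section Parabola.
Variables (R : realFieldType) (n : nat) (t : 'I_n -> R).
Local Open Scope ring_scope.
Implicit Types (a b c i j : 'I_n).
Hypothesis t_lt : forall i j, (i < j)%N -> t i < t j.

Lemma t_le i j : (i <= j)%N -> t i <= t j.
Proof.
by rewrite leq_eqVlt => /orP [/eqP /ord_inj -> // | /t_lt /ltW].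
Qed.

Lemma orientE a b c : orient t a b c = (t b - t a) * (t c - t a) * (t c - t b).
Proof. by rewrite /orient /pt /=; ring. Qed.

Lemma orientC a b c : orient t b a c = - orient t a b c.
Proof. by rewrite !orientE; ring. Qed.

Lemma orient_ge0 a b c : (a < b)%N -> ~~ (a < c < b)%N -> 0 <= orient t a b c.
Proof.
move=> /t_lt ab; rewrite negb_and -!leqNgt orientE -mulrA => /orP [/t_le ca | /t_le bc].
  by apply: mulr_ge0; [lra | nra].
by apply: mulr_ge0; [lra | nra].
Qed.

Lemma orient_gt0 a b c : (a < b)%N -> (c < a)%N || (b < c)%N -> 0 < orient t a b c.
Proof.
move=> /t_lt ab; rewrite orientE -mulrA => /orP [/t_lt ca | /t_lt bc].
  by apply: mulr_gt0; [lra | nra].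
by apply: mulr_gt0; [lra | nra].
Qed.

Lemma orient_le0 a b c : (a <= c <= b)%N -> orient t a b c <= 0.
Proof.
move=> /andP [/t_le ac /t_le cb]; rewrite orientE -mulrA.
by apply: mulr_ge0_le0; [lra | nra].
Qed.

Lemma orient_lt0 a b c : (a < c < b)%N -> orient t a b c < 0.
Proof.
move=> /andP [/t_lt ac /t_lt cb]; rewrite orientE -mulrA.
by rewrite pmulr_rlt0; [nra | lra].
Qed.

Definition combo (lam : 'I_n -> R) : R * R :=
  (\sum_i lam i * (pt t i).1, \sum_i lam i * (pt t i).2).

Definition side a b (z : R * R) : R :=
  ((pt t b).1 - (pt t a).1) * (z.2 - (pt t a).2)
  - ((pt t b).2 - (pt t a).2) * (z.1 - (pt t a).1).

Lemma sideC a b z : side b a z = - side a b z.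
Proof. by rewrite /side; ring. Qed.

Lemma side_combo a b lam : \sum_i lam i = 1 ->
  side a b (combo lam) = \sum_i lam i * orient t a b i.
Proof.
move=> lam1; set u := (pt t b).1 - (pt t a).1; set w := (pt t b).2 - (pt t a).2.
have term i : lam i * orient t a b i =
    u * (lam i * (pt t i).2) - w * (lam i * (pt t i).1)
    + (w * (pt t a).1 - u * (pt t a).2) * lam i by rewrite /orient /u /w; ring.
rewrite (eq_bigr _ (fun i _ => term i)) big_split sumrB -!mulr_sumr lam1.
by rewrite /side /u /w /pt /=; ring.
Qed.

Lemma conv_side_ge0 (S : {set 'I_n}) a b z : conv t S z ->
  {in S, forall c, 0 <= orient t a b c} -> 0 <= side a b z.
Proof.
move=> [lam [lam0 lamS lam1 ->]] Sab; rewrite side_combo //.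
apply: sumr_ge0 => i _; case: (boolP (i \in S)) => iS; first exact/mulr_ge0/Sab.
by rewrite lamS ?mul0r.
Qed.

Lemma conv_sub (S S' : {set 'I_n}) z : S \subset S' -> conv t S z -> conv t S' z.
Proof.
move=> SS' [lam [lam0 lamS lam1 ->]]; exists lam; split => // i iS'.
by apply: lamS; apply: contra iS'; apply: (subsetP SS').
Qed.

Lemma sum_mix (f g : 'I_n -> R) (r s : R) :
  \sum_i (r * f i + s * g i) = r * \sum_i f i + s * \sum_i g i.
Proof. by rewrite big_split -!mulr_sumr. Qed.

Lemma combo_mix (f g : 'I_n -> R) (r s : R) :
  combo (fun i => r * f i + s * g i) =
  (r * (combo f).1 + s * (combo g).1, r * (combo f).2 + s * (combo g).2).
Proof.
by rewrite /combo /=; congr (_, _); under eq_bigr => i _ do rewrite mulrDl -!mulrA;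
  rewrite big_split -!mulr_sumr.
Qed.

Lemma sum_if3 (F : 'I_n -> R) a b c (p q r : R) : a != b -> a != c -> b != c ->
  \sum_i (if i == a then p else if i == b then q else if i == c then r else 0) * F i
  = p * F a + q * F b + r * F c.
Proof.
move=> ab ac bc.
rewrite (bigD1 a) //= eqxx (bigD1 b) /=; last by rewrite eq_sym ab.
rewrite eq_sym (negbTE ab) eqxx (bigD1 c) /=; last by rewrite eq_sym ac eq_sym bc.
rewrite eq_sym (negbTE ac) eq_sym (negbTE bc) eqxx big1 ?addr0 ?addrA //.
by move=> i /andP [/andP [/negbTE -> /negbTE ->] /negbTE ->]; rewrite mul0r.
Qed.

Definition tri_coord a b c z i : R :=
  (if i == a then side b c z else if i == b then side c a z
   else if i == c then side a b z else 0) / orient t a b c.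

Lemma tri_coord_spec a b c z : a != b -> a != c -> b != c -> orient t a b c != 0 ->
  [/\ \sum_i tri_coord a b c z i = 1, combo (tri_coord a b c z) = z &
      forall i, i \notin [set a; b; c] -> tri_coord a b c z i = 0].
Proof.
move=> ab ac bc O0; rewrite /combo /tri_coord; split.
- under eq_bigr => i _ do rewrite -[_ / _]mulr1 mulrAC.
  rewrite -mulr_suml sum_if3 //; apply: (canLR (mulfK O0)).
  by move: O0; rewrite /side /orient; case: z => z1 z2 /= O0; field.
- under eq_bigr => i _ do rewrite mulrAC.
  under [X in (_, X)]eq_bigr => i _ do rewrite mulrAC.
  rewrite -!mulr_suml !sum_if3 //; case: z O0 => z1 z2.
  by rewrite /side /orient /= => O0; congr (_, _); field.
- by move=> i; rewrite !inE; do 3 case: eqP => //; rewrite mul0r.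
Qed.

Section Ear.
Variables (V : {set 'I_n}) (x v y : 'I_n).
Hypothesis hear : ear V x v y.

Let xV : x \in V. Proof. by case: hear => [[]]. Qed.
Let vV : v \in V. Proof. by case: hear => [[]]. Qed.
Let yV : y \in V. Proof. by case: hear => [[]]. Qed.
Let xv : (x < v)%N. Proof. by case: hear => _ /andP []. Qed.
Let vy : (v < y)%N. Proof. by case: hear => _ /andP []. Qed.
Let only_v c : c \in V -> (x < c < y)%N -> c = v. Proof. by case: hear => _ _; apply. Qed.

Lemma ear_sub : [set x; v; y] \subset V.
Proof. by apply/subsetP => c; rewrite !inE => /orP [/orP [] | ] /eqP ->. Qed.

Lemma card_ear : #|[set x; v; y]| = 3%N.
Proof.
rewrite -setUA cardsU1 cards2 !inE negb_or.
by rewrite -!(inj_eq val_inj) /= !neq_ltn xv vy (ltn_trans xv vy).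
Qed.

Lemma ear_orient_xv c : c \in V -> 0 <= orient t x v c.
Proof. by move=> cV; rewrite orient_ge0 // (ear_gap_left hear cV). Qed.

Lemma ear_orient_vy c : c \in V -> 0 <= orient t v y c.
Proof. by move=> cV; rewrite orient_ge0 // (ear_gap_right hear cV). Qed.

Lemma ear_orient_yx c : c \in V -> c != v -> orient t y x c <= 0.
Proof.
move=> cV cv; rewrite orientC oppr_le0; apply: orient_ge0; first lia.
by apply/negP => xcy; move/eqP: cv; apply; apply: only_v.
Qed.

Lemma ear_orient_yx_lt c : c \in V -> c \notin [set x; v; y] -> orient t y x c < 0.
Proof.
rewrite !inE -!(inj_eq val_inj) /= => cV /norP [/norP [cx cv] cy].
rewrite orientC oppr_lt0; apply: orient_gt0; first lia.
have /negP xcy : ~~ (x < c < y)%N.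
  by apply/negP => /(only_v cV) ecv; move: cv; rewrite ecv eqxx.
lia.
Qed.

Lemma ear_orient_gt0 : 0 < orient t x v y.
Proof. by apply: orient_gt0; rewrite ?vy ?orbT. Qed.

Lemma conv_ear_split z : conv t V z -> conv t [set x; v; y] z \/ conv t (V :\ v) z.
Proof.
move=> zV; have O_gt0 := ear_orient_gt0.
have xv' : x != v by rewrite -(inj_eq val_inj) neq_ltn xv.
have vy' : v != y by rewrite -(inj_eq val_inj) neq_ltn vy.
have xy' : x != y by rewrite -(inj_eq val_inj) neq_ltn (ltn_trans xv vy).
have [sum_b combo_b supp_b] := tri_coord_spec z xv' xy' vy' (lt0r_neq0 O_gt0).
set b := tri_coord x v y z in sum_b combo_b supp_b.
have bv : b v = side y x z / orient t x v y by rewrite /b /tri_coord eq_sym (negbTE xv') eqxx.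
have b_ge0 i : i != v -> 0 <= b i.
  move=> iv; rewrite /b /tri_coord (negbTE iv); apply: divr_ge0; last exact: ltW.
  case: eqP => _; first exact: conv_side_ge0 zV (fun c cV => ear_orient_vy cV).
  by case: eqP => _ //; exact: conv_side_ge0 zV (fun c cV => ear_orient_xv cV).
(* b are the barycentric coordinates of z in the ear; if z lies beyond the
   diagonal (b v < 0), the affine combination of b and lam that cancels the
   weight of v expresses z over V :\ v. *)
have [bv_ge0 | bv_lt0] := lerP 0 (b v).
  left; exists b; split => // i; first by case: (eqVneq i v) => [-> | /b_ge0].
right; case: zV => lam [lam0 lamV lam1 zE].
set D := lam v - b v; have D_gt0 : 0 < D by rewrite subr_gt0 (lt_le_trans bv_lt0).
have muv : lam v / D * b v + - b v / D * lam v = 0 by ring.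
exists (fun i => lam v / D * b i + - b v / D * lam i); split.
- move=> i; case: (eqVneq i v) => [-> | iv]; first by rewrite muv.
  have bv_ge0 : 0 <= - b v / D by rewrite divr_ge0 ?oppr_ge0 ?ltW.
  have lv_ge0 : 0 <= lam v / D by rewrite divr_ge0 ?lam0 ?ltW.
  by apply: addr_ge0; apply: mulr_ge0; rewrite ?b_ge0 ?lam0.
- move=> i; rewrite in_setD1 negb_and negbK => /orP [/eqP -> // | iV].
  have iT : i \notin [set x; v; y] by apply: contra iV; apply: (subsetP ear_sub).
  by rewrite (lamV i iV) (supp_b i iT) !mulr0 addr0.
- by rewrite sum_mix sum_b lam1 !mulr1 -mulrDl divff ?lt0r_neq0.
- have combo_lam : combo lam = z by rewrite zE.
  rewrite -/(combo _) combo_mix combo_b combo_lam -!mulrDl -/D divff ?lt0r_neq0 //.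
  by rewrite !mul1r -surjective_pairing.
Qed.

Lemma conv_ear_meet (s : {set 'I_n}) z : s \subset V :\ v ->
  conv t [set x; v; y] z -> conv t s z -> conv t ([set x; v; y] :&: s) z.
Proof.
move=> sVv ztri zs; have sV c : c \in s -> c \in V /\ c != v.
  by move/(subsetP sVv); rewrite in_setD1 => /andP [].
have side_ge0 : 0 <= side y x z.
  apply: (conv_side_ge0 ztri) => c; rewrite !inE => /orP [/orP [] | ] /eqP ->.
  - by rewrite orientE subrr !(mulr0, mul0r).
  - by rewrite orientC oppr_ge0 ltW // orient_lt0 ?xv.
  - by rewrite orientE subrr !(mulr0, mul0r).
have side_le0 : side y x z <= 0.
  rewrite sideC oppr_le0; apply: (conv_side_ge0 zs) => c /sV [cV cv].
  by rewrite -oppr_le0 -orientC ear_orient_yx.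
case: zs => mu [mu0 muS mu1 zE].
have term0 c : mu c * orient t y x c = 0.
  have side0 : side y x z = 0 by apply/eqP; rewrite eq_le side_le0 side_ge0.
  have sum0 : \sum_i - (mu i * orient t y x i) = 0.
    by rewrite sumrN -side_combo // (_ : combo mu = z) ?side0 ?oppr0.
  have terms_ge0 i : true -> 0 <= - (mu i * orient t y x i).
    move=> _; rewrite oppr_ge0; case: (boolP (i \in s)) => [/sV [iV iv] | iS].
      by rewrite mulr_ge0_le0 ?ear_orient_yx.
    by rewrite muS ?mul0r.
  by apply/eqP; rewrite -oppr_eq0; apply/eqP; apply: (psumr_eq0P terms_ge0 sum0).
exists mu; split => // i; rewrite in_setI negb_and => /orP [iT | iS]; last exact: muS.
case: (boolP (i \in s)) => [/sV [iV _] | iS]; last exact: muS.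
move/eqP: (term0 i); rewrite mulf_eq0 => /orP [/eqP // | /eqP o0].
by have := ear_orient_yx_lt iV iT; rewrite o0 ltxx.
Qed.

Lemma ear_triangulation (T : {set {set 'I_n}}) : is_triangulation t (V :\ v) T ->
  is_triangulation t V ([set x; v; y] |: T).
Proof.
move=> [T_sub T_cover T_meet].
have sub_V s : s \in T -> s \subset V.
  by move=> /T_sub [sVv _]; apply: subset_trans sVv (subsetDl _ _).
split.
- move=> s; rewrite in_setU1 => /predU1P [-> | sT]; first by rewrite ear_sub card_ear.
  by rewrite sub_V //; case: (T_sub s sT).
- move=> z; split.
    case/conv_ear_split => [ztri | /T_cover [s sT zs]].
      by exists [set x; v; y] => //; rewrite setU11.
    by exists s => //; rewrite setU1r.
  case=> s; rewrite in_setU1 => /predU1P [-> | /sub_V sV]; first exact: conv_sub ear_sub.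
  exact: conv_sub sV.
- have meet_sub s1 s2 z : conv t (s1 :&: s2) z -> conv t s1 z /\ conv t s2 z.
    by move=> z12; split; apply: conv_sub z12; rewrite ?subsetIl ?subsetIr.
  move=> s1 s2; rewrite !in_setU1 => /predU1P [-> | s1T] /predU1P [-> | s2T] z.
  + by rewrite setIid; split => [[] | ].
  + split=> [[ztri zs2] | /meet_sub //].
    by apply: conv_ear_meet ztri zs2; case: (T_sub s2 s2T).
  + split=> [[zs1 ztri] | /meet_sub //].
    by rewrite setIC; apply: conv_ear_meet ztri zs1; case: (T_sub s1 s1T).
  + exact: T_meet.
Qed.
End Ear.

Lemma singleton_triangulation (V : {set 'I_n}) : #|V| = 3%N -> is_triangulation t V [set V].
Proof.
move=> V3; split.
- by move=> s /set1P ->.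
- by move=> z; split => [zV | [s /set1P ->]] //; exists V; rewrite ?set11.
- by move=> s1 s2 /set1P -> /set1P -> z; rewrite setIid; split => [[] | ].
Qed.
End Parabola.

Section Triangulation.
Variables (n : nat) (L M Rg : {set {set 'I_n}}).
Implicit Types (V s e : {set 'I_n}) (a b c x v y : 'I_n).

Lemma edge_ok_sub s e :
  (forall a b, a \in s -> b \in s -> a < b -> pair_ok L M Rg a b) ->
  e \subset s -> edge_ok L M Rg e.
Proof.
move=> ok_s es v1 v2 ee v12; apply: ok_s => //; apply: (subsetP es).
  by rewrite ee set21.
by rewrite ee set22.
Qed.

Lemma ear_pairs_ok V x v y : boundary_ok L M Rg V -> ear V x v y ->
  pair_ok L M Rg x y ->
  forall a b, a \in [set x; v; y] -> b \in [set x; v; y] -> a < b -> pair_ok L M Rg a b.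
Proof.
move=> okV hear okxy; have [[xV vV yV] /andP [xv vy] _] := hear.
have okxv : pair_ok L M Rg x v by apply: okV => //; left=> c; exact: ear_gap_left hear.
have okvy : pair_ok L M Rg v y by apply: okV => //; left=> c; exact: ear_gap_right hear.
move=> a b; rewrite !inE => /orP [/orP [] | ] /eqP -> /orP [/orP [] | ] /eqP -> ab //; lia.
Qed.

Lemma boundary_ok_delete V x v y : ear V x v y -> pair_ok L M Rg x y ->
  boundary_ok L M Rg V -> boundary_ok L M Rg (V :\ v).
Proof.
move=> [[xV vV yV] /andP [xv vy] only_v] okxy okV a b.
have xVv : x \in V :\ v by rewrite in_setD1 xV -(inj_eq val_inj) neq_ltn xv.
have yVv : y \in V :\ v by rewrite in_setD1 yV -(inj_eq val_inj) neq_ltn vy orbT.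
rewrite !in_setD1 => /andP [av aV] /andP [bv bV] ab [consec | extreme].
- have [/andP [av' vb] | avb] := boolP (a < v < b).
    have ax : a = x :> nat.
      have := consec x xVv; case: (ltngtP a x) => [ax' | xa _ | //]; first lia.
      by have := only_v a aV ltac:(lia) => eav; move: av; rewrite eav eqxx.
    have yb : b = y :> nat.
      have := consec y yVv; case: (ltngtP b y) => [by' _ | yb' | //]; last lia.
      by have := only_v b bV ltac:(lia) => ebv; move: bv; rewrite ebv eqxx.
    by rewrite (ord_inj ax) (ord_inj yb).
  apply: okV => //; left=> c cV; have [-> // | cv] := eqVneq c v.
  by apply: consec; rewrite in_setD1 cv.
- apply: okV => //; right=> c cV; have [-> | cv] := eqVneq c v.
    by have := extreme x xVv; have := extreme y yVv; lia.
  by apply: extreme; rewrite in_setD1 cv.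
Qed.

Variables (R : realFieldType) (t : 'I_n -> R).
Hypothesis t_lt : forall i j : 'I_n, i < j -> (t i < t j)%R.

Lemma boundary_ok_of_polygon V :
  (forall a b, polygon_edge t V a b -> edge_ok L M Rg [set a; b]) -> boundary_ok L M Rg V.
Proof.
move=> okP a b aV bV ab hab.
have ab' : a != b by rewrite -(inj_eq val_inj) neq_ltn ab.
have /okP okab : polygon_edge t V a b.
  split => //; case: hab => hab; [left | right] => c cV.
  - exact: orient_ge0 (hab c cV).
  - exact: orient_le0 (hab c cV).
exact: okab a b erefl ab.
Qed.

Hypotheses (hLR : condLR L Rg) (hLMR : condLMR L M Rg) (hMM : condMM M).

Lemma triangulation_exists V : 2 < #|V| -> boundary_ok L M Rg V ->
  exists T : {set {set 'I_n}}, is_triangulation t V T /\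
    forall s e, s \in T -> e \subset s -> #|e| = 2 -> edge_ok L M Rg e.
Proof.
have [k] := ubnP #|V|; elim: k V => // k IH V Vk V3 okV.
have [x [v [y [hear okxy]]]] := exists_ear hLR hLMR hMM V3 okV.
have tri_ok e : e \subset [set x; v; y] -> edge_ok L M Rg e.
  exact: edge_ok_sub (ear_pairs_ok okV hear okxy).
have [V4 | V3'] : 3 < #|V| \/ #|V| = 3 by lia.
- have Vv : #|V :\ v| = #|V|.-1.
    by case: hear => [[_ vV _] _ _]; rewrite (cardsD1 v V) vV.
  have [T [triT okT]] := IH (V :\ v) ltac:(lia) ltac:(lia) (boundary_ok_delete hear okxy okV).
  exists ([set x; v; y] |: T); split; first exact: ear_triangulation.
  move=> s e; rewrite in_setU1 => /predU1P [-> es _ | sT]; [exact: tri_ok | exact: okT].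
- have eV : V = [set x; v; y].
    by apply/eqP; rewrite eq_sym eqEcard (ear_sub hear) (card_ear hear) V3'.
  exists [set V]; split; first exact: singleton_triangulation.
  by move=> s e /set1P ->; rewrite eV => es _; exact: tri_ok.
Qed.
End Triangulation.

Local Open Scope ring_scope.

Theorem lemma3p8 (R : realFieldType) (n : nat) (t : 'I_n -> R)
  (ht : forall i j : 'I_n, (i < j)%N -> t i < t j)
  (L M Rg : {set {set 'I_n}})
  (hL : forall e, e \in L -> #|e| = 2%N)
  (hR : forall e, e \in Rg -> #|e| = 2%N)
  (hM : forall s, s \in M -> #|s| = 3%N)
  (hLR : condLR L Rg) (hLMR : condLMR L M Rg) (hMM : condMM M)
  (V : {set 'I_n}) (hV : (3 <= #|V|)%N)
  (hP : forall a b : 'I_n, polygon_edge t V a b -> edge_ok L M Rg [set a; b]) :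
  exists T : {set {set 'I_n}},
    is_triangulation t V T /\
    (forall (s e : {set 'I_n}), s \in T -> e \subset s -> #|e| = 2%N -> edge_ok L M Rg e).
Proof.
exact: (triangulation_exists ht hLR hLMR hMM hV (boundary_ok_of_polygon ht hP)).
Qed.
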